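(* Let $\rho$ be a finitary type. The class of all $\rho$-dimensional t-algebras equals $\mathrm{Mod}(\mathrm{Str}(\rho))$ and is an Et-variety of type $\rho^\star$.
   Context: $\mathbb N=\{1,2,\dots\}$. A thread on $A$ is $s\in A^{\mathbb N}$; $r[a_1,\dots,a_n]$ is the thread with entries $a_i$ for $i\le n$ and $r_i$ for $i>n$; $r\equiv_{\mathbb N}s$ iff $\{i:r_i\neq s_i\}$ is finite, $[s]_{\mathbb N}$ its class. A trace on $A$ is a nonempty union of $\equiv_{\mathbb N}$-classes. A t-algebra of type $\tau$ and trace $\mathsf a$ is $(A,\mathsf a,\sigma^{\mathbf A})_{\sigma\in\tau}$ with $\sigma^{\mathbf A}:\mathsf a\to A$ arbitrary. t-subalgebra: $(B,\mathsf b,\sigma^{\mathbf A}|_{\mathsf b})$ with $B\subseteq A$, $\mathsf b\subseteq\mathsf a$ a trace on $B$, $\sigma^{\mathbf A}(\mathsf b)\subseteq B$. t-homomorphism: $f:A\to B$ with $f^{\mathbb N}(\mathsf a)\subseteq\mathsf b$ (coordinatewise) and $f\circ\sigma^{\mathbf A}=\sigma^{\mathbf B}\circ f^{\mathbb N}$; onto if $f$ and $f^{\mathbb N}:\mathsf a\to\mathsf b$ are surjective. t-product: universe $\prod_jA_j$, trace $\prod_j\mathsf a_j$ (with $(s^j)_j$ identified with the thread of entries $(s^j_k)_j$), operations componentwise. t-variety: closed under t-homomorphic images, t-subalgebras, t-products. $\tau$-terms: least set containing $\mathsf e_1,\mathsf e_2,\dots$ and $\sigma(t_1,\dots,t_n,\mathsf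 e_{n+1},\dots)$; term operations $\mathsf e_i^{\mathbf A}(s)=s_i$, $\sigma(t_1,\dots,t_n,\mathsf e_{n+1},\dots)^{\mathbf A}(s)=\sigma^{\mathbf A}(s[t_1^{\mathbf A}(s),\dots,t_n^{\mathbf A}(s)])$; $\theta_{\mathbf A}=\{(t,u):t^{\mathbf A}=u^{\mathbf A}\}$; $\mathrm{Mod}(\Sigma)=\{\mathbf A:\Sigma\subseteq\theta_{\mathbf A}\}$. $\mathbf A_{\bar s}$: universe $A_{\bar s}=\{t^{\mathbf A}(s)\}$, trace $[s]_{\mathbb N}\cap(A_{\bar s})^{\mathbb N}$. An Et-variety is a t-variety $K$ such that $\mathbf A_{\bar s}\in K$ for all $s$ in the trace of $\mathbf A$ implies $\mathbf A\in K$. A finitary type is $\rho=(\rho_n)_{n\ge0}$, disjoint sets of $n$-ary symbols; $\rho^\star=\bigcup_n\rho_n$, regarded as a type of t-algebras. A t-algebra $\mathbf A$ of type $\rho^\star$ and trace $\mathsf a$ is $\rho$-dimensional if for every $\sigma\in\rho_n$ and all $s,u\in\mathsf a$ with $s\equiv_{\mathbb N}u$ and $s_i=u_i$ for all $i\le n$, $\sigma^{\mathbf A}(s)=\sigma^{\mathbf A}(u)$. Let $F_\rho(I)$ be the $\rho$-terms over variables $I=\{v_1,v_2,\dots\}$. Define $(-)^\star:F_\rho(I)\to T_{\rho^\star}$ by $v_i^\star=\mathsf e_i$, $\sigma(p_1,\dots,p_n)^\star=\sigma(p_1^\star,\dots,p_n^\star,\mathsf e_{n+1},\mathsf e_{n+2},\dots)$,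 and $(-)^\bullet:T_{\rho^\star}\to F_\rho(I)$ by $\mathsf e_i^\bullet=v_i$ and, for $\sigma\in\rho_n$ and $t=\sigma(t_1,\dots,t_k,\mathsf e_{k+1},\dots)$: $t^\bullet=\sigma(t_1^\bullet,\dots,t_k^\bullet,v_{k+1},\dots,v_n)$ if $k\le n$, and $t^\bullet=\sigma(t_1^\bullet,\dots,t_n^\bullet)$ if $k>n$. $\mathrm{Str}(\rho)$ is the set of $\rho^\star$-identities $((t^\bullet)^\star,t)$ for $t\in T_{\rho^\star}$ not in the image of $(-)^\star$. *)

(* Threads are indexed from 0: the Rocq thread s : nat -> A has
   s 0 = s_1, s 1 = s_2, ...; likewise Var i denotes e_(i+1), FVar i denotes v_(i+1). *)
From Stdlib Require Import List Arith Lia FunctionalExtensionality ProofIrrelevance.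
From Stdlib Require Import ClassicalEpsilon.
Import ListNotations.
Set Implicit Arguments.

Definition eqN {A : Type} (r s : nat -> A) : Prop :=
  exists n, forall i, n <= i -> r i = s i.

Definition is_trace {A : Type} (a : (nat -> A) -> Prop) : Prop :=
  (exists s, a s) /\ (forall r s, a s -> eqN r s -> a r).

Record talg (tau : Type) := TAlg {
  car : Type;
  tr : (nat -> car) -> Prop;
  tr_trace : is_trace tr;
  op : tau -> forall s : nat -> car, tr s -> car }.

Definition upd {A : Type} (s : nat -> A) (l : list A) : nat -> A :=
  fun i => nth i l (s i).

Lemma upd_eqN {A : Type} (s : nat -> A) (l : list A) : eqN (upd s l) s.
Proof. exists (length l); intros i Hi; unfold upd; apply nth_overflow; lia. Qed.

Lemma upd_tr {tau : Type} (A : talg tau) (s : nat -> car A) (l : list (car A)) :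
  tr A s -> tr A (upd s l).
Proof. intro H; exact (proj2 (tr_trace A) _ _ H (upd_eqN s l)). Qed.

(* tau-terms: Var i = e_(i+1); App f [t1;..;tn] = f(t1,...,tn,e_(n+1),...) *)
Inductive term (tau : Type) : Type :=
| Var : nat -> term tau
| App : tau -> list (term tau) -> term tau.

Fixpoint teval {tau : Type} (A : talg tau) (t : term tau) (s : nat -> car A)
  (H : tr A s) {struct t} : car A :=
  match t with
  | Var _ i => s i
  | App f ts =>
      op A f (upd s (map (fun u => teval A u s H) ts))
        (@upd_tr _ A s (map (fun u => teval A u s H) ts) H)
  end.

Definition satisfies {tau : Type} (A : talg tau) (p : term tau * term tau) : Prop :=
  forall s (H : tr A s), teval A (fst p) s H = teval A (snd p) s H.

Definition Mod {tau : Type} (Sigma : term tau * term tau -> Prop) (A : talg tau) : Prop :=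
  forall p, Sigma p -> satisfies A p.

Definition thom {tau : Type} (A B : talg tau) (f : car A -> car B) : Prop :=
  exists Hf : (forall s, tr A s -> tr B (fun i => f (s i))),
    forall g s (H : tr A s), f (op A g s H) = op B g (fun i => f (s i)) (Hf s H).

Definition onto_thom {tau : Type} (A B : talg tau) (f : car A -> car B) : Prop :=
  thom A B f /\ (forall y, exists x, f x = y) /\
  (forall t, tr B t -> exists s, tr A s /\ (fun i => f (s i)) = t).

Definition subalg {tau : Type} (A : talg tau) (P : car A -> Prop)
  (b : (nat -> {x | P x}) -> Prop) (btr : is_trace b)
  (bsub : forall s, b s -> tr A (fun i => proj1_sig (s i)))
  (bop : forall g s (H : b s), P (op A g (fun i => proj1_sig (s i)) (bsub s H)))
  : talg tau :=
  {| car := {x | P x}; tr := b; tr_trace := btr;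
     op := fun g s H => exist _ (op A g (fun i => proj1_sig (s i)) (bsub s H)) (bop g s H) |}.

Definition prod_tr {tau J : Type} (A : J -> talg tau) (s : nat -> forall j, car (A j)) : Prop :=
  forall j, tr (A j) (fun i => s i j).

Lemma prod_tr_trace {tau J : Type} (A : J -> talg tau) : is_trace (prod_tr A).
Proof.
  split.
  - exists (fun i j => proj1_sig (constructive_indefinite_description _
                                     (proj1 (tr_trace (A j)))) i).
    intro j. exact (proj2_sig (constructive_indefinite_description _
                                  (proj1 (tr_trace (A j))))).
  - intros r s Hs [n Hn] j.
    apply (proj2 (tr_trace (A j))) with (s := fun i => s i j); [apply Hs|].
    exists n; intros i Hi; rewrite Hn; auto.
Qed.

Definition tprod {tau J : Type} (A : J -> talg tau) : talg tau :=
  {| car := forall j, car (A j); tr := prod_tr A; tr_trace := prod_tr_trace A;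
     op := fun g s H => fun j => op (A j) g (fun i => s i j) (H j) |}.

Definition H_closed {tau : Type} (K : talg tau -> Prop) : Prop :=
  forall (A B : talg tau) (f : car A -> car B), K A -> onto_thom A B f -> K B.

Definition S_closed {tau : Type} (K : talg tau -> Prop) : Prop :=
  forall (A : talg tau) P b btr bsub bop, K A -> K (@subalg tau A P b btr bsub bop).

Definition P_closed {tau : Type} (K : talg tau -> Prop) : Prop :=
  forall (J : Type) (A : J -> talg tau), (forall j, K (A j)) -> K (tprod A).

Definition tvariety {tau : Type} (K : talg tau -> Prop) : Prop :=
  H_closed K /\ S_closed K /\ P_closed K.

Section Abar.
Context {tau : Type} (A : talg tau) (s : nat -> car A) (H : tr A s).

Definition Abar_P (x : car A) : Prop := exists t, x = teval A t s H.

Definition Abar_tr (r : nat -> {x | Abar_P x}) : Prop :=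
  eqN (fun i => proj1_sig (r i)) s.

Lemma Abar_tr_trace : is_trace Abar_tr.
Proof.
  split.
  - exists (fun i => exist Abar_P (s i) (ex_intro _ (Var tau i) eq_refl)).
    exists 0; reflexivity.
  - intros r r' [n Hn] [m Hm]. exists (n + m); intros i Hi.
    rewrite Hm by lia. apply Hn; lia.
Qed.

Lemma Abar_sub : forall r, Abar_tr r -> tr A (fun i => proj1_sig (r i)).
Proof. intros r Hr. exact (proj2 (tr_trace A) _ _ H Hr). Qed.

Lemma op_ext (g : tau) (s1 s2 : nat -> car A) (H1 : tr A s1) (H2 : tr A s2) :
  s1 = s2 -> op A g s1 H1 = op A g s2 H2.
Proof. intros ->. f_equal. apply proof_irrelevance. Qed.

Lemma Abar_op : forall g r (Hr : Abar_tr r),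
  Abar_P (op A g (fun i => proj1_sig (r i)) (Abar_sub Hr)).
Proof.
  intros g r Hr. destruct Hr as [n Hn].
  assert (Hb : forall k, exists ts, length ts = k /\
            forall i, i < k -> teval A (nth i ts (Var tau 0)) s H = proj1_sig (r i)).
  { induction k as [|k [ts [Hl Ht]]].
    - exists []; split; [reflexivity|intros; lia].
    - destruct (proj2_sig (r k)) as [t Htk].
      exists (ts ++ [t]); split.
      + rewrite length_app; simpl; lia.
      + intros i Hi. destruct (Nat.eq_dec i k) as [->|Hne].
        * rewrite app_nth2 by lia. rewrite Hl, Nat.sub_diag. simpl. auto.
        * rewrite app_nth1 by lia. apply Ht; lia. }
  destruct (Hb n) as [ts [Hl Ht]].
  exists (App g ts). simpl. apply op_ext.
  apply functional_extensionality; intro i. unfold upd.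
  destruct (Nat.lt_ge_cases i n) as [Hi|Hi].
  - rewrite nth_indep with (d' := teval A (Var tau 0) s H)
      by (rewrite length_map; lia).
    rewrite (map_nth (fun u => teval A u s H)). symmetry; apply Ht; auto.
  - rewrite nth_overflow by (rewrite length_map; lia). apply Hn; auto.
Qed.

Definition Abar : talg tau := @subalg tau A Abar_P Abar_tr Abar_tr_trace Abar_sub Abar_op.
End Abar.

Definition Et_variety {tau : Type} (K : talg tau -> Prop) : Prop :=
  tvariety K /\
  forall A : talg tau, (forall s (H : tr A s), K (Abar A s H)) -> K A.

(* ---- finitary types rho: symbols sym with arity ar; rho^* = sym ---- *)

Definition rho_dim {sym : Type} (ar : sym -> nat) (A : talg sym) : Prop :=
  forall (g : sym) (s u : nat -> car A) (Hs : tr A s) (Hu : tr A u),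
    eqN s u -> (forall i, i < ar g -> s i = u i) -> op A g s Hs = op A g u Hu.

Inductive fterm (sym : Type) : Type :=
| FVar : nat -> fterm sym
| FApp : sym -> list (fterm sym) -> fterm sym.

Fixpoint fwf {sym : Type} (ar : sym -> nat) (p : fterm sym) : Prop :=
  match p with
  | FVar _ _ => True
  | FApp g ps => length ps = ar g /\
      (fix all (l : list (fterm sym)) : Prop :=
         match l with [] => True | q :: l' => fwf ar q /\ all l' end) ps
  end.

Fixpoint star {sym : Type} (p : fterm sym) : term sym :=
  match p with
  | FVar _ i => Var sym i
  | FApp g ps => App g (map star ps)
  end.

Fixpoint bullet {sym : Type} (ar : sym -> nat) (t : term sym) : fterm sym :=
  match t with
  | Var _ i => FVar sym i
  | App g ts => FApp g (firstn (ar g) (map (bullet ar) ts) ++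
                        map (FVar sym) (seq (length ts) (ar g - length ts)))
  end.

Definition in_star_image {sym : Type} (ar : sym -> nat) (t : term sym) : Prop :=
  exists p, fwf ar p /\ star p = t.

Definition Str {sym : Type} (ar : sym -> nat) (p : term sym * term sym) : Prop :=
  exists t, ~ in_star_image ar t /\ p = (star (bullet ar t), t).

(* Soundness of Str(rho): in a rho-dimensional algebra the identity
   (t^bullet)^star = t holds because the two sides apply the same symbol g to
   threads that agree at the first ar g places and differ at finitely many.
   Completeness: the single identity
   g(e_1,...,e_n, e_M,...,e_M) = g(e_1,...,e_n) (n = ar g, K > n arguments) of
   Str(rho) says that changing the entries n < i <= K of the argument to the
   entry at M does not change the value of g; choosing M beyond the place where
   two threads start to coincide collapses both threads to a common one.
   The same collapsing argument, carried out inside A_{\bar s}, gives the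
   Et-property, and closure under H, S, P is direct (for H, lift the finitely
   many differing entries along the surjection). *)

From Stdlib Require Import List Arith Lia FunctionalExtensionality ProofIrrelevance.
From Stdlib Require Import ClassicalEpsilon Bool.
Open Scope bool_scope.
Import ListNotations.

Lemma eqN_sym {X : Type} (r s : nat -> X) : eqN r s -> eqN s r.
Proof. intros [n Hn]; exists n; intros; symmetry; auto. Qed.

Lemma eqN_trans {X : Type} (r s t : nat -> X) : eqN r s -> eqN s t -> eqN r t.
Proof.
  intros [n Hn] [m Hm]; exists (n + m); intros i Hi.
  rewrite Hn, Hm; auto; lia.
Qed.

Lemma tr_eqN {tau : Type} (A : talg tau) (r s : nat -> car A) :
  tr A s -> eqN r s -> tr A r.
Proof. exact (proj2 (tr_trace A) r s). Qed.

Lemma nth_map_lt {X Y : Type} (f : X -> Y) (l : list X) (i : nat) (d : Y) (d0 : X) :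
  i < length l -> nth i (map f l) d = f (nth i l d0).
Proof.
  intro Hi; rewrite nth_indep with (d' := f d0) by (rewrite length_map; lia).
  apply map_nth.
Qed.

Lemma upd_map_seq {X : Type} (x : nat -> X) (n : nat) : upd x (map x (seq 0 n)) = x.
Proof.
  apply functional_extensionality; intro i; unfold upd.
  destruct (Nat.lt_ge_cases i n).
  - rewrite nth_map_lt with (d0 := 0), seq_nth by (rewrite ?length_seq; lia).
    reflexivity.
  - apply nth_overflow; rewrite length_map, length_seq; lia.
Qed.

Lemma nth_firstn_pad {X : Type} (f : nat -> X) (l : list X) (k i : nat) (d : X) :
  i < k -> nth i (firstn k l ++ map f (seq (length l) (k - length l))) d = nth i l (f i).
Proof.
  intro Hik; destruct (Nat.lt_ge_cases i (length l)) as [Hl|Hl].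
  - rewrite app_nth1 by (rewrite length_firstn; lia).
    rewrite nth_firstn; replace (i <? k) with true by (symmetry; apply Nat.ltb_lt; lia).
    apply nth_indep; lia.
  - rewrite app_nth2 by (rewrite length_firstn; lia).
    rewrite length_firstn, nth_map_lt with (d0 := 0), seq_nth
      by (rewrite ?length_seq; lia).
    rewrite nth_overflow by lia; f_equal; lia.
Qed.

Definition splice {X : Type} (lo hi : nat) (x y : nat -> X) : nat -> X :=
  fun i => if (lo <=? i) && (i <? hi) then y i else x i.

Section Splice.
Variables (X : Type) (lo hi : nat) (x y : nat -> X).

Lemma splice_below i : i < lo -> splice lo hi x y i = x i.
Proof. intro; unfold splice; replace (lo <=? i) with false by (symmetry; apply Nat.leb_gt; lia); auto. Qed.

Lemma splice_above i : hi <= i -> splice lo hi x y i = x i.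
Proof.
  intro; unfold splice; replace (i <? hi) with false by (symmetry; apply Nat.ltb_ge; lia).
  now rewrite Bool.andb_false_r.
Qed.

Lemma splice_between i : lo <= i < hi -> splice lo hi x y i = y i.
Proof.
  intro; unfold splice.
  replace (lo <=? i) with true by (symmetry; apply Nat.leb_le; lia).
  replace (i <? hi) with true by (symmetry; apply Nat.ltb_lt; lia); auto.
Qed.

Lemma splice_eqN : eqN (splice lo hi x y) x.
Proof. exists hi; apply splice_above. Qed.

Lemma map_splice {Y : Type} (f : X -> Y) :
  (fun i => f (splice lo hi x y i)) = splice lo hi (fun i => f (x i)) (fun i => f (y i)).
Proof. apply functional_extensionality; intro i; unfold splice; now destruct (_ && _). Qed.

Lemma splice_outside_eq :
  (forall i, i < lo \/ hi <= i -> x i = y i) -> splice lo hi x y = y.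
Proof.
  intro Hxy; apply functional_extensionality; intro i.
  destruct (Nat.lt_ge_cases i lo); [rewrite splice_below; auto|].
  destruct (Nat.lt_ge_cases i hi); [rewrite splice_between; auto|].
  rewrite splice_above; auto.
Qed.

End Splice.

Section FinitaryType.
Variables (sym : Type) (ar : sym -> nat).

Fixpoint term_ind_list (P : term sym -> Prop) (HV : forall i, P (Var sym i))
  (HA : forall g ts, Forall P ts -> P (App g ts)) (t : term sym) : P t :=
  match t with
  | Var _ i => HV i
  | App g ts => HA g ts ((fix F l := match l return Forall P l with
                     | [] => Forall_nil _
                     | u :: l' => Forall_cons _ (term_ind_list P HV HA u) (F l') end) ts)
  end.

Lemma teval_star_bullet (A : talg sym) : rho_dim ar A ->
  forall t x (H : tr A x), teval A (star (bullet ar t)) x H = teval A t x H.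
Proof.
  intros HA t; induction t as [i|g ts IH] using term_ind_list; intros x H; [reflexivity|].
  cbn [star bullet teval]; apply HA.
  - eapply eqN_trans; [apply upd_eqN | apply eqN_sym, upd_eqN].
  - intros i Hi; unfold upd.
    rewrite firstn_map, map_map, map_app, map_map, map_map.
    rewrite (map_ext_in _ (fun u => teval A u x H)) by
      (intros u Hu; apply (proj1 (Forall_forall _ _) IH);
       rewrite <- (firstn_skipn (ar g) ts); apply in_or_app; left; exact Hu).
    rewrite <- firstn_map.
    cbn [star teval]; rewrite <- (length_map (fun u => teval A u x H) ts).
    now apply nth_firstn_pad.
Qed.

Definition collapse_invariant (A : talg sym) : Prop :=
  forall g x (Hx : tr A x) M K (Hc : tr A (splice (ar g) K x (fun _ => x M))),
    ar g < K -> op A g x Hx = op A g _ Hc.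

Lemma rho_dim_of_collapse_invariant (A : talg sym) :
  collapse_invariant A -> rho_dim ar A.
Proof.
  intros HA g s u Hs Hu [n Hn] Hlt.
  set (K := n + ar g + 1).
  assert (Hcs : tr A (splice (ar g) K s (fun _ => s n)))
    by (eapply tr_eqN; [exact Hs | apply splice_eqN]).
  assert (Hcu : tr A (splice (ar g) K u (fun _ => u n)))
    by (eapply tr_eqN; [exact Hu | apply splice_eqN]).
  rewrite (HA g s Hs n K Hcs), (HA g u Hu n K Hcu) by lia.
  apply op_ext, functional_extensionality; intro i.
  destruct (Nat.lt_ge_cases i (ar g)); [rewrite !splice_below; auto|].
  destruct (Nat.lt_ge_cases i K);
    [rewrite !splice_between; auto | rewrite !splice_above; auto; apply Hn; lia].
Qed.

Definition collapse_term (g : sym) (M K : nat) : term sym :=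
  App g (map (Var sym) (seq 0 (ar g)) ++ repeat (Var sym M) (K - ar g)).

Lemma collapse_term_not_star g M K : ar g < K -> ~ in_star_image ar (collapse_term g M K).
Proof.
  intros HK [[i|g' ps] [Hwf Hst]]; [discriminate|].
  injection Hst as -> Hps; destruct Hwf as [Hl _].
  apply (f_equal (@length _)) in Hps.
  rewrite length_map, length_app, length_map, length_seq, repeat_length in Hps; lia.
Qed.

Lemma star_bullet_collapse_term g M K : ar g <= K ->
  star (bullet ar (collapse_term g M K)) = App g (map (Var sym) (seq 0 (ar g))).
Proof.
  intro HK; unfold collapse_term; cbn [bullet star].
  rewrite length_app, length_map, length_seq, repeat_length.
  replace (ar g - (ar g + (K - ar g))) with 0 by lia; cbn [seq map].
  rewrite !app_nil_r, map_app, firstn_app, map_map, length_map, length_seq, Nat.sub_diag.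
  rewrite firstn_all2 by (rewrite length_map, length_seq; lia).
  cbn; rewrite app_nil_r, !map_map; reflexivity.
Qed.

Lemma teval_App_vars (A : talg sym) g (l : list nat) x (H : tr A x) :
  teval A (App g (map (Var sym) l)) x H = op A g (upd x (map x l)) (upd_tr A x (map x l) H).
Proof. cbn [teval]; apply op_ext; now rewrite map_map. Qed.

Lemma collapse_invariant_of_Mod (A : talg sym) :
  Mod (Str ar) A -> collapse_invariant A.
Proof.
  intros HM g x Hx M K Hc HK.
  assert (Hid := HM _ (ex_intro _ _ (conj (collapse_term_not_star g M K HK) eq_refl)) x Hx).
  cbn [fst snd] in Hid; rewrite star_bullet_collapse_term, teval_App_vars in Hid by lia.
  unfold collapse_term in Hid; cbn [teval] in Hid.
  rewrite map_app, !map_map, map_repeat in Hid; cbn [teval] in Hid.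
  erewrite op_ext, Hid by (symmetry; apply upd_map_seq).
  apply op_ext, functional_extensionality; intro i; unfold upd.
  destruct (Nat.lt_ge_cases i (ar g)).
  - rewrite splice_below, app_nth1 by (rewrite ?length_map, ?length_seq; lia).
    rewrite (nth_map_lt x) with (d0 := 0), seq_nth by (rewrite ?length_seq; lia).
    reflexivity.
  - rewrite app_nth2, length_map, length_seq by (rewrite length_map, length_seq; lia).
    destruct (Nat.lt_ge_cases i K).
    + rewrite splice_between, nth_repeat_lt by lia; reflexivity.
    + rewrite splice_above, nth_overflow by (rewrite ?repeat_length; lia); reflexivity.
Qed.

Lemma rho_dim_H_closed : H_closed (rho_dim ar).
Proof.
  intros A B f HA [[Hf Hhom] [Hsurj Hlift]] g t t' Ht Ht' [n Hn] Hlt.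
  destruct (Hlift t Ht) as [s [Hs <-]].
  set (h := fun y => proj1_sig (constructive_indefinite_description _ (Hsurj y))).
  assert (Hh : forall y, f (h y) = y)
    by (intro y; exact (proj2_sig (constructive_indefinite_description _ (Hsurj y)))).
  set (s' := splice (ar g) n s (fun i => h (t' i))).
  assert (Hs' : tr A s') by (eapply tr_eqN; [exact Hs | apply splice_eqN]).
  assert (Hfs' : (fun i => f (s' i)) = t').
  { unfold s'; rewrite map_splice.
    replace (fun i => f (h (t' i))) with t' by (apply functional_extensionality; auto).
    apply splice_outside_eq; intros i [Hi|Hi]; [apply Hlt | apply Hn]; lia. }
  rewrite (op_ext B g Ht (Hf s Hs) eq_refl), <- Hhom.
  transitivity (f (op A g s' Hs')).
  - f_equal; apply HA; [apply eqN_sym, splice_eqN|].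
    intros i Hi; symmetry; apply splice_below, Hi.
  - rewrite Hhom; apply op_ext, Hfs'.
Qed.

Lemma rho_dim_S_closed : S_closed (rho_dim ar).
Proof.
  intros A P b btr bsub bop HA g s u Hs Hu [n Hn] Hlt.
  apply subset_eq_compat, HA.
  - exists n; intros i Hi; rewrite Hn; auto.
  - intros i Hi; rewrite Hlt; auto.
Qed.

Lemma rho_dim_P_closed : P_closed (rho_dim ar).
Proof.
  intros J A HA g s u Hs Hu [n Hn] Hlt.
  apply functional_extensionality_dep; intro j; apply HA.
  - exists n; intros i Hi; rewrite Hn; auto.
  - intros i Hi; rewrite Hlt; auto.
Qed.

(* In A_{\bar x} the collapsed thread is the thread of variables e_(c i), where c
   is the correspondingly collapsed index map. *)
Lemma rho_dim_of_Abar (A : talg sym) :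
  (forall s (H : tr A s), rho_dim ar (Abar A s H)) -> rho_dim ar A.
Proof.
  intros HA; apply rho_dim_of_collapse_invariant; intros g x Hx M K Hc HK.
  set (c := splice (ar g) K (fun i => i) (fun _ => M)).
  set (r1 := fun i => exist (Abar_P A x Hx) (x i) (ex_intro _ (Var sym i) eq_refl)).
  set (r2 := fun i => exist (Abar_P A x Hx) (x (c i)) (ex_intro _ (Var sym (c i)) eq_refl)).
  assert (Hr1 : tr (Abar A x Hx) r1) by (exists 0; reflexivity).
  assert (Hr2 : tr (Abar A x Hx) r2)
    by (exists K; intros i Hi; cbn; unfold c; rewrite splice_above; auto).
  assert (E : op (Abar A x Hx) g r1 Hr1 = op (Abar A x Hx) g r2 Hr2).
  { apply HA.
    - exists K; intros i Hi; apply subset_eq_compat; unfold c; rewrite splice_above; auto.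
    - intros i Hi; apply subset_eq_compat; unfold c; rewrite splice_below; auto. }
  apply EqdepFacts.eq_sig_fst in E.
  etransitivity; [|etransitivity; [exact E|]]; apply op_ext; [reflexivity|].
  cbn; unfold c; now rewrite map_splice.
Qed.

End FinitaryType.

Theorem mainTheorem12 (sym : Type) (ar : sym -> nat) :
  (forall A : talg sym, rho_dim ar A <-> Mod (Str ar) A) /\
  Et_variety (rho_dim ar).
Proof.
  split.
  - intro A; split.
    + intros HA p [t [_ ->]] x H; apply teval_star_bullet; auto.
    + intro HM; apply rho_dim_of_collapse_invariant, collapse_invariant_of_Mod, HM.
  - split; [split; [|split]|].
    + apply rho_dim_H_closed.
    + apply rho_dim_S_closed.
    + apply rho_dim_P_closed.
    + apply rho_dim_of_Abar.
Qed.
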